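(* Let $A=(a_{ij})_{1\le i,j\le n}$ be a complex matrix such that $A^T$ is a Nekrasov matrix. Let $\bar k$ be the smallest index such that $a_{j\bar k}=0$ for all $j>\bar k$, and let $\bar\epsilon_1,\dots,\bar\epsilon_n$ be real numbers with $\bar\epsilon_i=0$ for $i<\bar k$ and, for $i=\bar k,\dots,n$, $0<\bar\epsilon_i<|a_{ii}|-h_i(A^T)$ and $\bar\epsilon_i>\sum_{j=\bar k}^{i-1}\frac{|a_{ji}|\bar\epsilon_j}{|a_{jj}|}$. Define $\bar w_i:=\sum_{j=1}^{i-1}|a_{ji}|\frac{\bar\epsilon_j}{|a_{jj}|}$ and $\bar p_i:=\sum_{j=i+1}^{n}|a_{ji}|\frac{|a_{jj}|-h_j(A^T)-\bar\epsilon_j}{|a_{jj}|}$. Then $$\|A^{-1}\|_1\le \frac{\max_{i\in N}\frac{h_i(A^T)+\bar\epsilon_i}{|a_{ii}|}}{\min_{i\in N}(\bar\epsilon_i-\bar w_i+\bar p_i)}.$$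
   Context: For a complex $n\times n$ matrix $B=(b_{ij})$ with $b_{ii}\ne 0$ for all $i$, define recursively $h_1(B):=\sum_{j\ne 1}|b_{1j}|$ and $h_i(B):=\sum_{j=1}^{i-1}|b_{ij}|\frac{h_j(B)}{|b_{jj}|}+\sum_{j=i+1}^{n}|b_{ij}|$ for $i=2,\dots,n$. $B$ is a Nekrasov matrix if $|b_{ii}|>h_i(B)$ for all $i\in N=\{1,\dots,n\}$. $\|\cdot\|_1$ is the maximum absolute column sum norm. *)

(* Complex entries: C is an arbitrary numClosedFieldType
   (covers the complex numbers). *)
From HB Require Import structures.
From mathcomp Require Import all_boot all_order all_algebra.
Set Implicit Arguments. Unset Strict Implicit. Unset Printing Implicit Defensive.
Import Order.TTheory GRing.Theory Num.Theory.
Local Open Scope ring_scope.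

Section Nekrasov.
Variables (C : numClosedFieldType) (n : nat).

(* fuel-based version of the recursion; [hfuel B f i] is the correct h_i
   as soon as f > i (0-based indices) *)
Fixpoint hfuel (B : 'M[C]_n) (f : nat) (i : 'I_n) : C :=
  match f with
  | 0 => 0
  | f'.+1 =>
      \sum_(j < n | (j < i)%N) `|B i j| * hfuel B f' j / `|B j j|
      + \sum_(j < n | (i < j)%N) `|B i j|
  end.

Definition nek_h (B : 'M[C]_n) (i : 'I_n) : C := hfuel B i.+1 i.

Definition nekrasov (B : 'M[C]_n) : Prop :=
  forall i : 'I_n, B i i != 0 /\ nek_h B i < `|B i i|.

Definition norm1 (M : 'M[C]_n) : C :=
  \big[Num.max/0]_(j < n) \sum_(i < n) `|M i j|.

End Nekrasov.

(* Put x_i := (h_i(A^T) + eps_i) / |a_ii| >= 0.  Unfolding the Nekrasov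
   recursion for h_i(A^T) shows that the column defects
   |a_ii| x_i - sum_(j <> i) |a_ji| x_j equal eps_i - w_i + p_i exactly, and the
   hypotheses on eps make these positive (for i < kbar through a nonzero entry
   below the diagonal of column i).  Column dominance with weights x and
   positive defects g gives sum_i |y_i| g_i <= sum_i x_i |(A y)_i| for every vector y;
   hence A is invertible and, taking y a column of A^-1, each column sum of
   |A^-1| is at most max x / min g. *)

From HB Require Import structures.
From mathcomp Require Import all_boot all_order all_algebra.
From mathcomp Require Import ring.
Set Implicit Arguments.
Unset Strict Implicit.
Unset Printing Implicit Defensive.
Import Order.TTheory GRing.Theory Num.Theory.
Local Open Scope ring_scope.

Lemma real_bigmin_le (R : numDomainType) (I : eqType) (r : seq I) (F : I -> R) x0 i :
  i \in r -> x0 \is Num.real -> (forall j, F j \is Num.real) ->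
  \big[Num.min/x0]_(j <- r) F j <= F i.
Proof.
move=> + x0r Fr; elim: r => // a r IH; rewrite inE big_cons.
have cmp := real_comparable (Fr a) (@bigmin_real _ _ x0 r predT F x0r (fun j _ => Fr j)).
rewrite (comparable_ge_min _ cmp) => /predU1P[->|/IH ->]; by rewrite ?lexx ?orbT.
Qed.

Lemma real_le_bigmax (R : numDomainType) (I : eqType) (r : seq I) (F : I -> R) x0 i :
  i \in r -> x0 \is Num.real -> (forall j, F j \is Num.real) ->
  F i <= \big[Num.max/x0]_(j <- r) F j.
Proof.
move=> + x0r Fr; elim: r => // a r IH; rewrite inE big_cons.
have cmp := real_comparable (Fr a) (@bigmax_real _ _ x0 r predT F x0r (fun j _ => Fr j)).
rewrite (comparable_le_max _ cmp) => /predU1P[->|/IH ->]; by rewrite ?lexx ?orbT.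
Qed.

Lemma bigmin_ord_mem {R : numDomainType} {n : nat} (F : 'I_n.+1 -> R) :
  exists k, \big[Num.min/F ord0]_(j < n.+1) F j = F k.
Proof.
apply: (big_ind (fun x => exists k, x = F k)); first by exists ord0.
  by move=> _ _ [k1 ->] [k2 ->]; rewrite /Num.min /Order.min; case: ifP; eauto.
by move=> i _; exists i.
Qed.

Section WeightedColumnDominance.
Variables (R : numFieldType) (n : nat) (A : 'M[R]_n) (d g : 'I_n -> R).
Hypothesis d_ge0 : forall i, 0 <= d i.
Hypothesis g_gt0 : forall i, 0 < g i.
Hypothesis col_dominance :
  forall i, g i <= `|A i i| * d i - \sum_(j < n | j != i) `|A j i| * d j.

Lemma norm_row_ge_dominant (y : 'cV[R]_n) i :
  `|A i i| * `|y i 0| - \sum_(j < n | j != i) `|A i j| * `|y j 0| <= `|(A *m y) i 0|.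
Proof.
rewrite mxE [X in _ <= `|X|](bigD1 i) //=; apply: (le_trans _ (lerB_normD _ _)).
rewrite normrM lerD2l lerN2; apply: le_trans (ler_norm_sum _ _ _) _.
by apply: ler_sum => j _; rewrite normrM.
Qed.

Lemma weighted_norm_le_mul (y : 'cV[R]_n) :
  \sum_i `|y i 0| * g i <= \sum_i d i * `|(A *m y) i 0|.
Proof.
(* Exchanging the double sum turns the column estimate into a row estimate. *)
have swap : \sum_i `|y i 0| * \sum_(j < n | j != i) `|A j i| * d j
          = \sum_i d i * \sum_(j < n | j != i) `|A i j| * `|y j 0|.
  under eq_bigr do rewrite mulr_sumr.
  rewrite (exchange_big_dep predT) //=; apply: eq_bigr => i _.
  rewrite mulr_sumr; apply: eq_big => [j|j _]; first by rewrite eq_sym.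
  by rewrite mulrC -mulrA mulrCA.
have row_bound i := ler_wpM2l (d_ge0 i) (norm_row_ge_dominant y i).
have col_bound i := ler_wpM2l (normr_ge0 (y i 0)) (col_dominance i).
apply: (le_trans _ (ler_sum _ (fun i _ => row_bound i))).
apply: le_trans (ler_sum _ (fun i _ => col_bound i)) _.
rewrite le_eqVlt; apply/orP; left; apply/eqP.
under eq_bigr do rewrite mulrBr.
under [RHS]eq_bigr do rewrite mulrBr.
rewrite !sumrB swap; congr (_ - _); apply: eq_bigr => i _.
by rewrite mulrC -mulrA mulrCA.
Qed.

Lemma weighted_dominance_unitmx : A \in unitmx.
Proof.
rewrite unitmxE unitfE -det_tr; apply/negP => /det0P[v nz_v vA0].
have Av0 : A *m v^T = 0 by rewrite -[A]trmxK -trmx_mul vA0 trmx0.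
have := weighted_norm_le_mul v^T; rewrite Av0 [X in _ <= X]big1 => [|i _]; last first.
  by rewrite mxE normr0 mulr0.
move=> sum_le0; case/negP: nz_v; apply/eqP/matrixP => a j; rewrite ord1 mxE.
have g_part i : 0 <= `|v^T i 0| * g i by rewrite mulr_ge0 // ltW.
have sum0 : \sum_i `|v^T i 0| * g i = 0.
  by apply/le_anti; rewrite sum_le0 sumr_ge0.
have /eqP := psumr_eq0P (fun i _ => g_part i) sum0 (i := j) isT.
by rewrite mulf_eq0 (gt_eqF (g_gt0 j)) orbF normr_eq0 mxE => /eqP.
Qed.

Lemma weighted_colsum_invmx_le c : \sum_i `|invmx A i c| * g i <= d c.
Proof.
have A_col : A *m col c (invmx A) = delta_mx c 0.
  by rewrite colE mulmxA mulmxV ?weighted_dominance_unitmx ?mul1mx.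
have := weighted_norm_le_mul (col c (invmx A)); rewrite A_col.
rewrite [X in _ <= X](bigD1 c) //= [X in _ <= _ + X]big1 => [|i ic]; last first.
  by rewrite mxE (negPf ic) normr0 mulr0.
rewrite mxE !eqxx normr1 mulr1 addr0; congr (_ <= _).
by apply: eq_bigr => i _; rewrite mxE.
Qed.

End WeightedColumnDominance.

Lemma norm1_le (C : numClosedFieldType) (n : nat) (M : 'M[C]_n) (b : C) :
  0 <= b -> (forall j, \sum_i `|M i j| <= b) -> norm1 M <= b.
Proof.
move=> b_ge0 colM; apply: (big_ind (fun x => x <= b)) => // x y.
by rewrite /Num.max /Order.max; case: ifP.
Qed.

Lemma norm1_invmx_weighted_le (C : numClosedFieldType) (n : nat) (A : 'M[C]_n.+1)
    (d g : 'I_n.+1 -> C) :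
  (forall i, 0 <= d i) -> (forall i, 0 < g i) ->
  (forall i, g i <= `|A i i| * d i - \sum_(j < n.+1 | j != i) `|A j i| * d j) ->
  norm1 (invmx A) <= \big[Num.max/d ord0]_i d i / \big[Num.min/g ord0]_i g i.
Proof.
move=> d_ge0 g_gt0 dom.
have d_real i : d i \is Num.real by rewrite ger0_real.
have g_real i : g i \is Num.real by rewrite gtr0_real.
set D := \big[Num.max/d ord0]_i d i; set m := \big[Num.min/g ord0]_i g i.
have d_le i : d i <= D by rewrite real_le_bigmax ?mem_index_enum.
have m_le i : m <= g i by rewrite real_bigmin_le ?mem_index_enum.
have m_gt0 : 0 < m by rewrite /m; have [k ->] := bigmin_ord_mem g.
have D_ge0 : 0 <= D := le_trans (d_ge0 ord0) (d_le ord0).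
apply: norm1_le => [|c]; first by rewrite divr_ge0 // ltW.
rewrite ler_pdivlMr // mulr_suml; apply: (le_trans _ (d_le c)).
apply: (le_trans _ (weighted_colsum_invmx_le d_ge0 g_gt0 dom c)).
by apply: ler_sum => i _; rewrite ler_wpM2l.
Qed.

Lemma sum_ord_neq_split (R : nmodType) (n : nat) (i : 'I_n) (F : 'I_n -> R) :
  \sum_(j < n | j != i) F j = \sum_(j < n | (j < i)%N) F j + \sum_(j < n | (i < j)%N) F j.
Proof.
rewrite (bigID (fun j : 'I_n => (j < i)%N)) /=.
by congr (_ + _); apply: eq_bigl => j; rewrite -(inj_eq val_inj) /=; case: ltngtP.
Qed.

Section NekrasovRecursion.
Variables (C : numClosedFieldType) (n : nat) (B : 'M[C]_n).

Lemma hfuel_stable f f' (i : 'I_n) :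
  (i < f)%N -> (i < f')%N -> hfuel B f i = hfuel B f' i.
Proof.
elim: f f' i => [//|f IH] [//|f'] i /= ltif ltif'.
congr (_ + _); apply: eq_bigr => j ltji.
by rewrite (IH f') // (leq_trans ltji).
Qed.

Lemma nek_hE i :
  nek_h B i = \sum_(j < n | (j < i)%N) `|B i j| * nek_h B j / `|B j j|
              + \sum_(j < n | (i < j)%N) `|B i j|.
Proof.
rewrite /nek_h /=; congr (_ + _); apply: eq_bigr => j ltji.
by rewrite (@hfuel_stable i j.+1).
Qed.

Lemma nek_h_ge0 i : 0 <= nek_h B i.
Proof.
rewrite /nek_h; move: i.+1 => f; elim: f i => [|f IH] i //=.
by rewrite addr_ge0 ?sumr_ge0 // => j _; rewrite divr_ge0 ?mulr_ge0.
Qed.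

End NekrasovRecursion.

Section NekrasovWeights.
Variables (C : numClosedFieldType) (n : nat) (A : 'M[C]_n) (eps : 'I_n -> C).

Definition nek_weight (i : 'I_n) : C := (nek_h A^T i + eps i) / `|A i i|.

Definition nek_wbar (i : 'I_n) : C :=
  \sum_(j < n | (j < i)%N) `|A j i| * eps j / `|A j j|.

Definition nek_pbar (i : 'I_n) : C :=
  \sum_(j < n | (i < j)%N) `|A j i| * (`|A j j| - nek_h A^T j - eps j) / `|A j j|.

Lemma nek_weight_col_defect i : (forall j, A j j != 0) ->
  `|A i i| * nek_weight i - \sum_(j < n | j != i) `|A j i| * nek_weight j
  = eps i - nek_wbar i + nek_pbar i.
Proof.
move=> A_diag; have normA_neq0 j : `|A j j| != 0 by rewrite normr_eq0.
set h := nek_h A^T.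
have h_rec : h i = \sum_(j < n | (j < i)%N) `|A j i| * h j / `|A j j|
                   + \sum_(j < n | (i < j)%N) `|A j i|.
  by rewrite /h nek_hE; congr (_ + _); apply: eq_bigr => j _; rewrite !mxE.
have lower : \sum_(j < n | (j < i)%N) `|A j i| * nek_weight j
    = \sum_(j < n | (j < i)%N) `|A j i| * h j / `|A j j| + nek_wbar i.
  rewrite /nek_wbar -big_split; apply: eq_bigr => j _.
  by rewrite /nek_weight mulrDl mulrDr !mulrA.
have upper : \sum_(j < n | (i < j)%N) `|A j i| * nek_weight j
    = \sum_(j < n | (i < j)%N) `|A j i| - nek_pbar i.
  rewrite /nek_pbar -sumrB; apply: eq_bigr => j _.
  by rewrite /nek_weight; field.
rewrite sum_ord_neq_split lower upper /nek_weight mulrC divfK // -/h h_rec.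
ring.
Qed.

End NekrasovWeights.

Section CorollaryWeights.
Variables (C : numClosedFieldType) (n : nat) (A : 'M[C]_n).
Variables (kbar : 'I_n) (eps : 'I_n -> C).
Hypothesis nekA : nekrasov A^T.
Hypothesis col_nonzero_below :
  forall k : 'I_n, (k < kbar)%N -> exists2 j : 'I_n, (k < j)%N & A j k != 0.
Hypothesis eps_below : forall i : 'I_n, (i < kbar)%N -> eps i = 0.
Hypothesis eps_above : forall i : 'I_n, (kbar <= i)%N ->
  [/\ eps i \is Num.real, 0 < eps i, eps i < `|A i i| - nek_h A^T i
    & \sum_(j < n | (kbar <= j < i)%N) `|A j i| * eps j / `|A j j| < eps i].

Lemma nekrasov_tr_diag_neq0 (i : 'I_n) : A i i != 0.
Proof. by have [] := nekA i; rewrite mxE. Qed.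

Lemma eps_ge0 (i : 'I_n) : 0 <= eps i.
Proof.
case: (ltnP i kbar) => [/eps_below -> //|/eps_above[_ eps_gt0 _ _]].
exact: ltW.
Qed.

Lemma nek_slack_gt0 (i : 'I_n) : 0 < `|A i i| - nek_h A^T i - eps i.
Proof.
rewrite subr_gt0; case: (ltnP i kbar) => [/eps_below ->|/eps_above[] //].
by have [_] := nekA i; rewrite subr_gt0 mxE.
Qed.

Lemma nek_wbar_lt (i : 'I_n) : (kbar <= i)%N -> nek_wbar A eps i < eps i.
Proof.
move=> /eps_above[_ _ _]; apply: le_lt_trans.
rewrite /nek_wbar [X in X <= _]big_mkcond [X in _ <= X]big_mkcond /=.
apply: ler_sum => j _; case: (ltnP j kbar) => [/eps_below ->|_]; case: ifP => //.
by rewrite mulr0 mul0r.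
Qed.

Lemma nek_wbar_eq0 (i : 'I_n) : (i < kbar)%N -> nek_wbar A eps i = 0.
Proof.
move=> lti; rewrite /nek_wbar big1 // => j ltj.
by rewrite eps_below ?mulr0 ?mul0r // (ltn_trans ltj).
Qed.

Lemma nek_pbar_term_ge0 (i j : 'I_n) :
  0 <= `|A j i| * (`|A j j| - nek_h A^T j - eps j) / `|A j j|.
Proof. by rewrite divr_ge0 ?mulr_ge0 // ltW ?nek_slack_gt0. Qed.

Lemma nek_pbar_ge0 (i : 'I_n) : 0 <= nek_pbar A eps i.
Proof. by rewrite sumr_ge0 // => j _; apply: nek_pbar_term_ge0. Qed.

Lemma nek_pbar_gt0 (i : 'I_n) : (i < kbar)%N -> 0 < nek_pbar A eps i.
Proof.
move=> /col_nonzero_below[j ltij Aji_neq0]; rewrite /nek_pbar (bigD1 j) //=.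
rewrite ltr_pwDl ?sumr_ge0 // => [|k _]; last exact: nek_pbar_term_ge0.
by rewrite divr_gt0 ?mulr_gt0 ?nek_slack_gt0 ?normr_gt0 ?nekrasov_tr_diag_neq0.
Qed.

Lemma nek_defect_gt0 (i : 'I_n) : 0 < eps i - nek_wbar A eps i + nek_pbar A eps i.
Proof.
case: (ltnP i kbar) => lti.
  by rewrite eps_below // nek_wbar_eq0 // subrr add0r nek_pbar_gt0.
by rewrite ltr_pwDl ?nek_pbar_ge0 // subr_gt0 nek_wbar_lt.
Qed.

End CorollaryWeights.

Theorem corollary4p2 (C : numClosedFieldType) (n : nat) (A : 'M[C]_n.+1)
  (kbar : 'I_n.+1) (eps : 'I_n.+1 -> C) :
  nekrasov A^T ->
  (* kbar is the smallest index k with a_{jk} = 0 for all j > k *)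
  (forall j : 'I_n.+1, (kbar < j)%N -> A j kbar = 0) ->
  (forall k : 'I_n.+1, (k < kbar)%N -> exists2 j : 'I_n.+1, (k < j)%N & A j k != 0) ->
  (forall i : 'I_n.+1, (i < kbar)%N -> eps i = 0) ->
  (forall i : 'I_n.+1, (kbar <= i)%N ->
     [/\ eps i \is Num.real, 0 < eps i, eps i < `|A i i| - nek_h A^T i
       & \sum_(j < n.+1 | (kbar <= j < i)%N) `|A j i| * eps j / `|A j j| < eps i]) ->
  let w := fun i : 'I_n.+1 =>
    \sum_(j < n.+1 | (j < i)%N) `|A j i| * eps j / `|A j j| in
  let p := fun i : 'I_n.+1 =>
    \sum_(j < n.+1 | (i < j)%N)
       `|A j i| * (`|A j j| - nek_h A^T j - eps j) / `|A j j| in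
  let F := fun i : 'I_n.+1 => (nek_h A^T i + eps i) / `|A i i| in
  let G := fun i : 'I_n.+1 => eps i - w i + p i in
  norm1 (invmx A) <=
    (\big[Num.max/F ord0]_(i < n.+1) F i) / (\big[Num.min/G ord0]_(i < n.+1) G i).
Proof.
move=> nekA _ col_nonzero_below eps_below eps_above; cbv zeta.
apply: norm1_invmx_weighted_le => i.
- by rewrite divr_ge0 // addr_ge0 ?nek_h_ge0 // (eps_ge0 eps_below eps_above).
- exact: (nek_defect_gt0 nekA col_nonzero_below eps_below eps_above).
- rewrite (nek_weight_col_defect _ _ (nekrasov_tr_diag_neq0 nekA)).
  by rewrite le_eqVlt eqxx.
Qed.
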